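(* Let $\Gamma$ be a finite simple undirected graph with at least one edge, whose automorphism group $G$ acts primitively on the vertex set, and let $r$ be the chromatic number of $\Gamma$. Then $\Gamma$ does not contain a subgraph isomorphic to the complete graph on $r+1$ vertices with one edge removed.
   Context: A permutation group is primitive if it is transitive and preserves no equivalence relation other than equality and the universal relation. *)

From mathcomp Require Import all_boot all_fingroup.
Set Implicit Arguments.
Unset Strict Implicit.
Unset Printing Implicit Defensive.

Definition simple_graph (V : finType) (e : rel V) : Prop :=
  symmetric e /\ irreflexive e.

Definition graph_aut (V : finType) (e : rel V) (g : {perm V}) : Prop :=
  forall x y, e (g x) (g y) = e x y.

Definition aut_primitive (V : finType) (e : rel V) : Prop :=
  (forall x y : V, exists g : {perm V}, graph_aut e g /\ g x = y) /\
  (forall R : rel V, equivalence_rel R ->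
     (forall g : {perm V}, graph_aut e g -> forall x y, R x y -> R (g x) (g y)) ->
     (forall x y, R x y = (x == y)) \/ (forall x y, R x y = true)).

Definition colourable (V : finType) (e : rel V) (k : nat) : Prop :=
  exists c : V -> 'I_k, forall x y, e x y -> c x != c y.

Definition chromatic_number (V : finType) (e : rel V) (r : nat) : Prop :=
  colourable e r /\ forall k, colourable e k -> r <= k.

(* The graph contains a (not necessarily induced) subgraph isomorphic to
   K_n minus one edge: here the missing edge is {0, 1} of 'I_n. *)
Definition contains_Kn_minus_edge (V : finType) (e : rel V) (n : nat) : Prop :=
  exists f : 'I_n -> V, injective f /\
    forall i j : 'I_n, i != j -> ~~ ((i <= 1) && (j <= 1))%N -> e (f i) (f j).

From mathcomp Require Import all_boot all_fingroup.
Set Implicit Arguments.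
Unset Strict Implicit.
Unset Printing Implicit Defensive.

(* Call x and y colour-forced if they get the same colour in every proper
   r-colouring.  This is an equivalence relation invariant under every graph
   automorphism, so by primitivity it is equality or universal.  It is not
   universal, since an edge is never colour-forced.  It is not equality: in a
   copy of K_(r+1) minus the edge {u, v}, a proper r-colouring has to repeat a
   colour by pigeonhole, and only u and v may share one. *)

Section ColourForced.
Variables (V : finType) (e : rel V) (k : nat).

Definition proper_colouringb (c : {ffun V -> 'I_k}) : bool :=
  [forall x, forall y, e x y ==> (c x != c y)].

Definition colour_forced : rel V := fun x y =>
  [forall c : {ffun V -> 'I_k}, proper_colouringb c ==> (c x == c y)].

Lemma colour_forced_equiv : equivalence_rel colour_forced.
Proof.
move=> x y z; split; first by apply/forallP => c; apply/implyP.
move=> /forallP Fxy; apply/forallP/forallP => F c; apply/implyP => pc;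
  move: (Fxy c) (F c); rewrite pc => /eqP-> /eqP-> //.
Qed.

Lemma colour_forced_aut (g : {perm V}) :
  graph_aut e g -> forall x y, colour_forced x y -> colour_forced (g x) (g y).
Proof.
move=> autg x y /forallP Fxy; apply/forallP => c; apply/implyP => pc.
have := Fxy [ffun z => c (g z)]; rewrite !ffunE => /implyP; apply.
apply/forallP => a; apply/forallP => b; apply/implyP => eab; rewrite !ffunE.
by move/forallP: pc => /(_ (g a)) /forallP /(_ (g b)); rewrite autg eab.
Qed.

Lemma colour_forced_edge x y :
  colourable e k -> e x y -> ~~ colour_forced x y.
Proof.
move=> [c proper_c] exy; apply/forallPn; exists [ffun z => c z].
rewrite negb_imply !ffunE proper_c // andbT.
by apply/forallP => a; apply/forallP => b; apply/implyP => /proper_c; rewrite !ffunE.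
Qed.

End ColourForced.

Definition ord1 {n : nat} : 'I_n.+2 := @Ordinal n.+2 1 isT.

Lemma Kn_minus_edge_colour_forced (V : finType) (e : rel V) (k : nat)
    (f : 'I_k.+2 -> V) :
    (forall i j : 'I_k.+2, i != j -> ~~ ((i <= 1) && (j <= 1))%N -> e (f i) (f j)) ->
  colour_forced e k.+1 (f ord0) (f ord1).
Proof.
move=> fe; apply/forallP => c; apply/implyP => /forallP proper_c.
apply: contraT => c01.
suff /leq_card : injective (fun i : 'I_k.+2 => c (f i)).
  by rewrite !card_ord ltnn.
suff ltP (i j : 'I_k.+2) : i < j -> c (f i) != c (f j).
  move=> i j /eqP; apply: contraTeq.
  by rewrite neq_ltn => /orP[/ltP | /ltP]; rewrite // eq_sym.
move=> ltij.
case: (boolP ((i <= 1) && (j <= 1))%N) => [/andP[_ le_j1] | far]; last first.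
  move/forallP: (proper_c (f i)) => /(_ (f j)) /implyP; apply.
  by apply: fe far; rewrite neq_ltn ltij.
have [-> ->] : i = ord0 /\ j = ord1.
  by split; apply/val_inj; move: ltij le_j1 => /=; case: (val i) (val j) => [|?] [|[|?]].
exact: c01.
Qed.

Theorem lemma8 (V : finType) (e : rel V) (r : nat) :
  simple_graph e ->
  (exists x y, e x y) ->
  aut_primitive e ->
  chromatic_number e r ->
  ~ contains_Kn_minus_edge e r.+1.
Proof.
move=> _ [x [y exy]] [_ prim] [col _] [f [finj fe]].
case: r col f finj fe => [[c _] | r col f finj fe]; first by case: (c x).
have forced := Kn_minus_edge_colour_forced fe.
have f01 : f ord0 != f ord1 by rewrite (inj_eq finj).
have [forced_eq | forced_all] :=
  prim _ (colour_forced_equiv e r.+1) (@colour_forced_aut V e r.+1).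
  by move: forced; rewrite forced_eq (negbTE f01).
by move: (colour_forced_edge col exy); rewrite forced_all.
Qed.
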